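(* Let $D$ be a connected locally semicomplete digraph in which no inclusion-wise maximal weak hub is mixed. If $X$ and $Y$ are two distinct inclusion-wise maximal weak hubs of $D$, then $X\cap Y=\emptyset$.
   Context: Digraphs are finite, no loops, no parallel arcs; digons allowed. $x^+$, $x^-$ are out- and in-neighbourhoods. A digraph is semicomplete if any two distinct vertices are joined by at least one arc; locally semicomplete if every $x^+$ and every $x^-$ induces a semicomplete digraph. A weak hub is a set $X\subseteq V(D)$ with $D[X]$ strongly connected such that some vertex $x$ satisfies $X\subseteq x^-\setminus x^+$ or $X\subseteq x^+\setminus x^-$. A weak hub $X$ is mixed if there exist $x\notin X$ and $u,v\in X$ such that $xu$ and $vx$ are arcs. *)

From mathcomp Require Import all_boot.
Set Implicit Arguments. Unset Strict Implicit. Unset Printing Implicit Defensive.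

(* A digraph on a finite vertex type T is a boolean arc relation [arc];
   "no loops" is [irreflexive arc]; parallel arcs cannot occur; digons
   (arc u v && arc v u) are allowed. *)

Section Digraphs.
Variables (T : finType) (arc : rel T).

Definition outN (x : T) : {set T} := [set y | arc x y].
Definition inN (x : T) : {set T} := [set y | arc y x].

Definition semicomplete_on (S : {set T}) : Prop :=
  forall u v, u \in S -> v \in S -> u != v -> arc u v || arc v u.

Definition locally_semicomplete : Prop :=
  forall x, semicomplete_on (outN x) /\ semicomplete_on (inN x).

Definition connected_digraph : Prop :=
  forall x y, connect (fun a b => arc a b || arc b a) x y.

Definition strong_on (X : {set T}) : Prop :=
  X != set0 /\
  forall u v, u \in X -> v \in X ->
    connect (fun a b => [&& arc a b, a \in X & b \in X]) u v.

Definition weak_hub (X : {set T}) : Prop :=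
  strong_on X /\
  exists x, X \subset inN x :\: outN x \/ X \subset outN x :\: inN x.

Definition max_weak_hub (X : {set T}) : Prop :=
  weak_hub X /\ forall Y, weak_hub Y -> X \subset Y -> Y = X.

Definition mixed (X : {set T}) : Prop :=
  exists x u v, [/\ x \notin X, u \in X, v \in X, arc x u & arc v x].

End Digraphs.

From mathcomp Require Import all_boot.
Set Implicit Arguments. Unset Strict Implicit. Unset Printing Implicit Defensive.

(* Suppose c lies in X and Y.  By maximality of Y there is some
   b in Y \ X.  Reversing all arcs if necessary, Y sits inside y^- \ y^+ for
   some vertex y.  Then:
   - y is not in X: otherwise the walk in Y from c to b leaves X along an arc
     u -> w with w outside X, and w -> y, u -> w would make X mixed;
   - hence c -> y with y outside X, and a strong non-mixed set sending one arc
     to an outside vertex y lies entirely in y^- \ y^+ (local semicompleteness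
     of the out-neighbourhoods forbids the strong set from "escaping" y).
   So X :|: Y is a strong set inside y^- \ y^+, i.e. a weak hub containing
   both X and Y, and maximality forces X = Y. *)

Lemma connect_exit (T : finType) (e : rel T) (S : pred T) x y :
  connect e x y -> S x -> ~~ S y -> exists u w, [/\ e u w, S u & ~~ S w].
Proof.
move=> /connectP [p]; elim: p x => [|z p IH] x /=; first by move=> _ -> ->.
move=> /andP [exz pz] ly Sx nSy; case Sz: (S z); first exact: IH pz ly Sz nSy.
by exists x, z; rewrite exz Sx Sz.
Qed.

Section StrongSets.
Variables (T : finType) (arc : rel T).

Lemma strong_exit (X : {set T}) (S : pred T) u v :
  strong_on arc X -> u \in X -> v \in X -> S u -> ~~ S v ->
  exists a b, [/\ arc a b, a \in X, b \in X, S a & ~~ S b].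
Proof.
move=> [_ sX] uX vX Su nSv.
have [a [b [/and3P [ab aX bX] Sa nSb]]] := connect_exit (sX u v uX vX) Su nSv.
by exists a, b.
Qed.

Lemma strong_union (X Y : {set T}) c :
  strong_on arc X -> strong_on arc Y -> c \in X -> c \in Y ->
  strong_on arc (X :|: Y).
Proof.
move=> [_ sX] [_ sY] cX cY; split; first by apply/set0Pn; exists c; rewrite inE cX.
pose e a b := [&& arc a b, a \in X :|: Y & b \in X :|: Y].
have lift (Z : {set T}) : Z \subset X :|: Y ->
    forall u v, connect (fun a b => [&& arc a b, a \in Z & b \in Z]) u v ->
    connect e u v.
  move=> /subsetP sZ; apply: connect_sub => a b /and3P [ab aZ bZ].
  by apply: connect1; rewrite /e ab !sZ.
have [sXU sYU] := (subsetUl X Y, subsetUr X Y).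
have via_c u : u \in X :|: Y -> connect e u c /\ connect e c u.
  case/setUP => [uX|uY].
    by split; apply: (lift X sXU); apply: sX.
  by split; apply: (lift Y sYU); apply: sY.
move=> u v /via_c [uc _] /via_c [_ cv]; exact: connect_trans uc cv.
Qed.

End StrongSets.

Section InHubs.
Variables (T : finType) (arc : rel T).
Hypothesis lsc : locally_semicomplete arc.

Lemma center_outside (X Y : {set T}) y b c :
  ~ mixed arc X -> strong_on arc Y -> Y \subset inN arc y :\: outN arc y ->
  c \in X -> c \in Y -> b \in Y -> b \notin X -> y \notin X.
Proof.
move=> nmX sY /subsetP Yin cX cY bY bX; apply/negP => yX.
have [u [w [uw uY wY uX wX]]] := strong_exit (S := mem X) sY cY bY cX bX.
have /Yin := wY; rewrite !inE => /andP [_ wy].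
by apply: nmX; exists w, y, u.
Qed.

(* A strong non-mixed set X with an arc c -> y to an outside vertex y lies
   in y^- \ y^+: no arc leaves y into X (c would make X mixed), and if some
   vertex of X missed y, an arc u -> w of X with u -> y, w -/-> y would put
   the distinct out-neighbours y, w of u non-adjacent. *)
Lemma nonmixed_absorbed (X : {set T}) y c :
  ~ mixed arc X -> strong_on arc X -> y \notin X -> c \in X -> arc c y ->
  X \subset inN arc y :\: outN arc y.
Proof.
move=> nmX sX yX cX cy.
have no_out u : u \in X -> ~~ arc y u.
  by move=> uX; apply/negP => yu; apply: nmX; exists y, u, c.
have all_in v : v \in X -> arc v y.
  move=> vX; apply/negPn/negP => nvy.
  have [u [w [uw uX wX uy nwy]]] :=
    strong_exit (S := fun z => arc z y) sX cX vX cy nvy.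
  have yw : y != w by apply: contraNneq yX => ->.
  have := (lsc u).1 y w; rewrite !inE => /(_ uy uw yw).
  by rewrite (negbTE nwy) orbF (negbTE (no_out w wX)).
by apply/subsetP => v vX; rewrite !inE all_in ?no_out.
Qed.

Lemma union_in_hub (X Y : {set T}) y b c :
  ~ mixed arc X -> strong_on arc X -> strong_on arc Y ->
  Y \subset inN arc y :\: outN arc y ->
  c \in X -> c \in Y -> b \in Y -> b \notin X ->
  X :|: Y \subset inN arc y :\: outN arc y.
Proof.
move=> nmX sX sY Yin cX cY bY bX.
have yX := center_outside nmX sY Yin cX cY bY bX.
have /setDP [cy _] := subsetP Yin c cY; rewrite inE in cy.
by rewrite subUset Yin (nonmixed_absorbed nmX sX yX cX cy).
Qed.

End InHubs.

Definition converse (T : finType) (arc : rel T) : rel T := [rel a b | arc b a].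

Section Converse.
Variables (T : finType) (arc : rel T).

Lemma locally_semicomplete_converse :
  locally_semicomplete arc -> locally_semicomplete (converse arc).
Proof.
move=> lsc x; have [lout lin] := lsc x.
by split=> u v uN vN uv; rewrite /= orbC; [exact: lin | exact: lout].
Qed.

Lemma strong_on_converse (X : {set T}) :
  strong_on arc X -> strong_on (converse arc) X.
Proof.
move=> [X0 sX]; split=> // u v uX vX.
pose e a b := [&& arc a b, a \in X & b \in X].
have reversed : (fun a b => [&& converse arc a b, a \in X & b \in X])
                 =2 [rel a b | e b a].
  by move=> a b; rewrite /e /= (andbC (b \in X)).
by rewrite (eq_connect reversed) connect_rev; apply: sX.
Qed.

Lemma mixed_converse (X : {set T}) : mixed (converse arc) X -> mixed arc X.
Proof. by move=> [x [u [v [xX uX vX xu vx]]]]; exists x, v, u. Qed.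

Lemma union_out_hub (X Y : {set T}) y b c :
  locally_semicomplete arc ->
  ~ mixed arc X -> strong_on arc X -> strong_on arc Y ->
  Y \subset outN arc y :\: inN arc y ->
  c \in X -> c \in Y -> b \in Y -> b \notin X ->
  X :|: Y \subset outN arc y :\: inN arc y.
Proof.
move=> lsc nmX sX sY Yout.
apply: (union_in_hub (arc := converse arc)).
- exact: locally_semicomplete_converse.
- by move/mixed_converse.
- exact: strong_on_converse.
- exact: strong_on_converse.
- exact: Yout.
Qed.

End Converse.

Theorem claim4p4 (T : finType) (arc : rel T) :
  irreflexive arc ->
  connected_digraph arc ->
  locally_semicomplete arc ->
  (forall X, max_weak_hub arc X -> ~ mixed arc X) ->
  forall X Y : {set T}, max_weak_hub arc X -> max_weak_hub arc Y -> X != Y ->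
  X :&: Y = set0.
Proof.
move=> _ _ lsc nmix X Y mX mY neXY.
apply/eqP/negPn/negP => /set0Pn [c /setIP [cX cY]].
have nmX := nmix X mX.
have [[sX _] maxX] := mX; have [[sY [y Yhub]] maxY] := mY.
have [b bY bX] : exists2 b, b \in Y & b \notin X.
  apply/exists_inP; rewrite -negb_forall_in; apply: contra neXY => /forall_inP YX.
  by apply/eqP/(maxY X mX.1)/subsetP.
have XYhub : weak_hub arc (X :|: Y).
  split; first exact: strong_union sX sY cX cY.
  exists y; case: Yhub => [Yin | Yout]; [left | right].
  - exact: (union_in_hub lsc nmX sX sY Yin cX cY bY bX).
  - exact: (union_out_hub lsc nmX sX sY Yout cX cY bY bX).
have XY : X :|: Y = Y := maxY _ XYhub (subsetUr X Y).
have YX : Y = X by apply: (maxX Y mY.1); rewrite -XY subsetUl.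
by rewrite YX eqxx in neXY.
Qed.
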